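(* In the setting of the context, with $\alpha_k=\frac a{b+k}$, $a>0$, $b>1$, $\frac ab\le\frac1{2M\tilde L}$, put $s=a\sigma_{\min}^2$. For $n\ge1$ let $S_n=\sum_{i=1}^nq(\alpha_{i-1})B_i^{(n)}$. If $s<2$, there is a constant $K$ independent of $n$ with $S_n\le K(b+n)^{-s}$ for all $n\ge1$. If $s>2$, there is a constant $K$ independent of $n$ with $S_n\le K(b+n)^{-2}$ for all $n\ge1$.
   Context: Standing setting: $M\ge N$, $A\in\mathbb{R}^{M\times N}$ of full column rank with rows $a_1,\dots,a_M$, right-hand side $(b_1,\dots,b_M)$, $F(x)=\frac12\|Ax-(b_1,\dots,b_M)^\top\|^2$ with unique minimizer $x_*$; singular values $\sigma_1\ge\dots\ge\sigma_N>0$, $\sigma_{\max}=\sigma_1$, $\sigma_{\min}=\sigma_N$, $c(A)=\sigma_{\max}^2/\sigma_{\min}^2$, $\tilde L=\max_i\|a_i\|^2$, $f_i(x)=\frac M2(\langle a_i,x\rangle-b_i)^2$, $\sigma^2=\frac1M\sum_i\|\nabla f_i(x_* )\|^2$. Fix $\ell$. For $\alpha>0$: $A(\alpha)=1-2\alpha\sigma_\ell^2$, $B(\alpha)=\alpha^2M\tilde Lc(A)\sigma_{\max}^2$, $p(\alpha)=1-\alpha\sigma_{\min}^2$, $q(\alpha)=2\alpha^2\sigma^2$. For fixed $n$ and $0\le k\le n$: $B_k^{(n)}=\sum_{j=k}^n\Big(\prod_{i=j+1}^nA(\alpha_i)\Big)B(\alpha_j)\Big(\prod_{i=k}^{j-1}p(\alpha_i)\Big)$.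 (Step-size scalars $a,b$ are unrelated to $a_i,b_i$.) *)

From HB Require Import structures.
From mathcomp Require Import all_boot all_order all_algebra.
From mathcomp Require Import reals exp.
Set Implicit Arguments. Unset Strict Implicit. Unset Printing Implicit Defensive.
Import Order.TTheory GRing.Theory Num.Theory.
Local Open Scope ring_scope.

Section Defs.
Variable R : realType.

Definition sqnorm (n : nat) (v : 'cV[R]_n) : R := \sum_(i < n) (v i 0) ^+ 2.

(* sigma : nat -> R lists the singular values sigma_1 >= ... >= sigma_N of A
   (0-based: sigma 0 = sigma_1, ..., sigma N.-1 = sigma_N), i.e. a thin SVD
   A = U diag(sigma) V^T with U^T U = I_N, V^T V = I_N, sigma nonincreasing
   and nonnegative. *)
Definition singular_values (M N : nat) (A : 'M[R]_(M, N)) (sigma : nat -> R) :=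
  (forall i j, (i <= j)%N -> (j < N)%N -> sigma j <= sigma i) /\
  (forall i, (i < N)%N -> 0 <= sigma i) /\
  exists (U : 'M[R]_(M, N)) (V : 'M[R]_N),
    U^T *m U = 1%:M /\ V^T *m V = 1%:M /\
    A = U *m diag_mx (\row_(j < N) sigma j) *m V^T.

(* F(x) = 1/2 ||A x - y||^2 ; y is the right-hand side (b_1,...,b_M)^T *)
Definition Fobj (M N : nat) (A : 'M[R]_(M, N)) (y : 'cV[R]_M) (x : 'cV[R]_N) : R :=
  2^-1 * sqnorm (A *m x - y).

Definition Ltilde (M N : nat) (A : 'M[R]_(M, N)) : R :=
  \big[Num.max/0]_(i < M) \sum_(j < N) (A i j) ^+ 2.

Definition f_i (M N : nat) (A : 'M[R]_(M, N)) (y : 'cV[R]_M) (i : 'I_M)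
    (x : 'cV[R]_N) : R :=
  M%:R / 2 * ((A *m x) i 0 - y i 0) ^+ 2.

Definition grad_f_i (M N : nat) (A : 'M[R]_(M, N)) (y : 'cV[R]_M) (i : 'I_M)
    (x : 'cV[R]_N) : 'cV[R]_N :=
  (M%:R * ((A *m x) i 0 - y i 0)) *: (row i A)^T.

Definition noise_var (M N : nat) (A : 'M[R]_(M, N)) (y : 'cV[R]_M)
    (xs : 'cV[R]_N) : R :=
  M%:R^-1 * \sum_(i < M) sqnorm (grad_f_i A y i xs).

Definition condA (smax smin : R) : R := smax ^+ 2 / smin ^+ 2.

Definition Afun (sl alpha : R) : R := 1 - 2 * alpha * sl ^+ 2.
Definition Bfun (M : nat) (Lt smax smin alpha : R) : R :=
  alpha ^+ 2 * M%:R * Lt * condA smax smin * smax ^+ 2.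
Definition pfun (smin alpha : R) : R := 1 - alpha * smin ^+ 2.
Definition qfun (sig2 alpha : R) : R := 2 * alpha ^+ 2 * sig2.

Definition Bkn (M : nat) (sl Lt smax smin : R) (alpha : nat -> R) (n k : nat) : R :=
  \sum_(k <= j < n.+1)
     (\prod_(j.+1 <= i < n.+1) Afun sl (alpha i)) * Bfun M Lt smax smin (alpha j)
       * (\prod_(k <= i < j) pfun smin (alpha i)).

Definition Sn (M : nat) (sl Lt smax smin sig2 : R) (alpha : nat -> R) (n : nat) : R :=
  \sum_(1 <= i < n.+1) qfun sig2 (alpha i.-1) * Bkn M sl Lt smax smin alpha n i.

End Defs.

(* Write x = b + n + 1.  With alpha_k = a / (b + k), the sequence S_n obeys the coupled recursion
     S_(n+1) = A(alpha_(n+1)) S_n + B(alpha_(n+1)) (E_n + q(alpha_n)),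
     E_(n+1) = p(alpha_(n+1)) (E_n + q(alpha_n)),
   in which p(alpha_(n+1)) = 1 - s/x, A(alpha_(n+1)) <= 1 - 2s/x and B, q = O(x^-2); the
   step-size condition together with sigma_l^2 <= M Ltilde (a trace computation) keeps all these
   coefficients nonnegative.  Because x^-r (1 - r/x) <= (x+1)^-r, a nonnegative sequence with
   Y_(n+1) <= (1 - c/x) Y_n + O(x^-(r+1)) and r < c stays O(x^-r).  Hence E_n = O(x^-r) whenever
   r <= 1 and r < s, and then S_n = O(x^-t) whenever t <= 1 + r and t < 2s; the choices
   (r, t) = (s/2, s) for s < 2 and (r, t) = (1, 2) for s > 2 give the two claims. *)

From HB Require Import structures.
From mathcomp Require Import all_boot all_order all_algebra.
From mathcomp Require Import reals exp sequences.
From mathcomp Require Import ring lra.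
Set Implicit Arguments.
Unset Strict Implicit.
Unset Printing Implicit Defensive.

Import Order.TTheory GRing.Theory Num.Theory.
Local Open Scope ring_scope.

Section PowerBounds.
Variable R : realType.
Implicit Types x y r t u v c K D : R.

Lemma powRN_mul x u v : 0 < x -> x `^ (- u) * x `^ (- v) = x `^ (- (u + v)).
Proof. by move=> x_gt0; rewrite opprD powRD // lt0r_neq0 ?implybT. Qed.

Lemma ler_powRN x u v : 1 <= x -> u <= v -> x `^ (- v) <= x `^ (- u).
Proof. by move=> x_ge1 le_uv; rewrite ler_powR // lerN2. Qed.

Lemma ler_powRN_base x y t : 0 < x -> x <= y -> 0 <= t -> y `^ (- t) <= x `^ (- t).
Proof.
move=> x_gt0 le_xy t_ge0; have y_gt0 := lt_le_trans x_gt0 le_xy.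
rewrite !powRN lef_pV2 ?posrE ?powR_gt0 //.
by apply: ge0_ler_powR; rewrite // nnegrE ltW.
Qed.

Lemma powRN_shift_ge x r : 0 < x -> 0 <= r ->
  x `^ (- r) * (1 - r / x) <= (x + 1) `^ (- r).
Proof.
move=> x_gt0 r_ge0; have x1_gt0 : 0 < x + 1 by lra.
rewrite /powR (gt_eqF x_gt0) (gt_eqF x1_gt0).
have ln_x1 : ln (x + 1) <= ln x + x^-1.
  have -> : x + 1 = x * (1 + x^-1) by field; lra.
  have xV_gt0 : 0 < x^-1 by rewrite invr_gt0.
  by rewrite lnM ?posrE // ?lerD2l ?le_ln1Dx //; lra.
apply: (@le_trans _ _ (expR (- r * ln x + - (r / x)))).
  rewrite expRD ler_wpM2l ?expR_ge0 //.
  by have := expR_ge1Dx (- (r / x)); lra.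
rewrite ler_expR.
have gap_ge0 : 0 <= ln x + x^-1 - ln (x + 1) by lra.
by have := mulr_ge0 r_ge0 gap_ge0; rewrite mulrBr mulrDr; lra.
Qed.

Lemma contraction_step x r c K D (Y Y' : R) :
  0 < x -> 0 <= r -> 0 <= K -> D <= K * (c - r) -> 0 <= 1 - c / x ->
  0 <= Y -> Y <= K * x `^ (- r) ->
  Y' <= (1 - c / x) * Y + D * x `^ (- (r + 1)) ->
  Y' <= K * (x + 1) `^ (- r).
Proof.
move=> x_gt0 r_ge0 K_ge0 le_D cx_le1 Y_ge0 le_Y le_Y'.
apply: (le_trans _ (ler_wpM2l K_ge0 (powRN_shift_ge x_gt0 r_ge0))).
set w := x `^ (- r) in le_Y *; have w_ge0 : 0 <= w by exact: powR_ge0.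
have x_ge0 := ltW x_gt0.
move: le_Y'; rewrite -powRN_mul // powR_inv1 // -/w => le_Y'.
have xV_ge0 : 0 <= x^-1 by rewrite invr_ge0 ltW.
have := ler_wpM2l cx_le1 le_Y.
have gap_ge0 : 0 <= K * (c - r) - D by lra.
have := mulr_ge0 (mulr_ge0 w_ge0 xV_ge0) gap_ge0.
lra.
Qed.

Lemma ler_divr_sqr_powRN x c u : 1 <= x -> 0 <= c -> u <= 2 ->
  c / x ^+ 2 <= c * x `^ (- u).
Proof.
move=> x_ge1 c_ge0 u_le2; rewrite -powR_invn; last by lra.
exact/ler_wpM2l/ler_powRN.
Qed.

End PowerBounds.

Section CoupledRecurrence.
Variables (R : realType) (b s r t Cb Cq : R) (A B P Q S E : nat -> R).
Hypotheses (b_ge0 : 0 <= b) (r_ge0 : 0 <= r) (r_le1 : r <= 1) (lt_rs : r < s)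
  (t_ge0 : 0 <= t) (t_le : t <= 1 + r) (lt_t2s : t < 2 * s).
Hypotheses (Cb_ge0 : 0 <= Cb) (Cq_ge0 : 0 <= Cq).
Hypotheses (S0 : S 0 = 0) (E0 : E 0 = 0)
  (S_rec : forall n, S n.+1 = A n.+1 * S n + B n.+1 * (E n + Q n))
  (E_rec : forall n, E n.+1 = P n.+1 * (E n + Q n)).
Hypotheses
  (A_bound : forall n, 0 <= A n.+1 <= 1 - 2 * s / (b + n.+1%:R))
  (P_bound : forall n, 0 <= P n.+1 <= 1 - s / (b + n.+1%:R))
  (B_bound : forall n, 0 <= B n.+1 <= Cb / (b + n.+1%:R) ^+ 2)
  (Q_bound : forall n, 0 <= Q n <= Cq / (b + n.+1%:R) ^+ 2).

Lemma addr_natS n : b + n.+2%:R = b + n.+1%:R + 1.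
Proof. by rewrite -addn1 natrD addrA. Qed.

Lemma addr_natS_ge1 n : 1 <= b + n.+1%:R.
Proof. by rewrite -natr1 addrA lerDr addr_ge0. Qed.

Lemma recurrence_E_bound n :
  0 <= E n /\ E n <= Cq / (s - r) * (b + n.+1%:R) `^ (- r).
Proof.
have s_gt0 : 0 < s := le_lt_trans r_ge0 lt_rs.
have sr_gt0 : 0 < s - r by rewrite subr_gt0.
have K_ge0 : 0 <= Cq / (s - r) by rewrite divr_ge0 // ltW.
elim: n => [|n [E_ge0 le_E]]; first by rewrite E0 mulr_ge0 ?powR_ge0.
have x_ge1 := addr_natS_ge1 n; set x := b + n.+1%:R in x_ge1 le_E *.
have x_gt0 : 0 < x := lt_le_trans ltr01 x_ge1.
have /andP [P_ge0 le_P] := P_bound n; have /andP [Q_ge0 le_Q] := Q_bound n.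
have r1_le2 : r + 1 <= 2 by rewrite -[2]/(1 + 1) lerD2r.
have le_Q' := le_trans le_Q (ler_divr_sqr_powRN x_ge1 Cq_ge0 r1_le2).
split; first by rewrite E_rec mulr_ge0 ?addr_ge0.
rewrite addr_natS (contraction_step (c := s) (D := Cq) x_gt0 r_ge0 K_ge0 _ _ E_ge0 le_E) //.
- by rewrite mulfVK // gt_eqF.
- exact: le_trans P_ge0 le_P.
rewrite E_rec; apply: (le_trans (ler_wpM2r (addr_ge0 E_ge0 Q_ge0) le_P)).
rewrite mulrDr lerD2l; apply: le_trans le_Q'.
by rewrite ler_piMl // lerBlDr lerDl divr_ge0 // ltW.
Qed.

Lemma recurrence_decay :
  exists2 K, 0 <= K & forall n, S n <= K * (b + n.+1%:R) `^ (- t).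
Proof.
set K1 := Cq / (s - r); set D := Cb * (K1 + Cq).
have K1_ge0 : 0 <= K1 by rewrite divr_ge0 // subr_ge0 ltW.
have D_ge0 : 0 <= D by rewrite mulr_ge0 // addr_ge0.
have st_gt0 : 0 < 2 * s - t by rewrite subr_gt0.
have K_ge0 : 0 <= D / (2 * s - t) by rewrite divr_ge0 // ltW.
exists (D / (2 * s - t)) => //.
suff /(_ _)/proj2 : forall n, 0 <= S n /\ S n <= D / (2 * s - t) * (b + n.+1%:R) `^ (- t) by [].
elim=> [|n [S_ge0 le_S]]; first by rewrite S0 mulr_ge0 ?powR_ge0.
have [E_ge0 le_E] := recurrence_E_bound n.
have x_ge1 := addr_natS_ge1 n; set x := b + n.+1%:R in x_ge1 le_S le_E *.
have x_gt0 : 0 < x := lt_le_trans ltr01 x_ge1.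
have /andP [A_ge0 le_A] := A_bound n; have /andP [B_ge0 le_B] := B_bound n.
have /andP [Q_ge0 le_Q] := Q_bound n.
have r_le2 : r <= 2 by apply: le_trans r_le1 _; rewrite ler1n.
have tr_le2 : t + 1 - r <= 2 by rewrite lerBlDr -addrA [1 + r]addrC addrA lerD2r.
have le_EQ : E n + Q n <= (K1 + Cq) * x `^ (- r).
  by rewrite mulrDl lerD // (le_trans le_Q) // ler_divr_sqr_powRN.
have le_B' := le_trans le_B (ler_divr_sqr_powRN x_ge1 Cb_ge0 tr_le2).
split; first by rewrite S_rec addr_ge0 ?mulr_ge0 ?addr_ge0.
rewrite addr_natS (contraction_step (c := 2 * s) (D := D) x_gt0 t_ge0 K_ge0 _ _ S_ge0 le_S) //.
- by rewrite mulfVK // gt_eqF.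
- exact: le_trans A_ge0 le_A.
rewrite S_rec lerD ?ler_wpM2r //.
apply: le_trans (ler_pM B_ge0 (addr_ge0 E_ge0 Q_ge0) le_B' le_EQ) _.
by rewrite mulrACA powRN_mul // subrK.
Qed.

End CoupledRecurrence.

Section Recursions.
Variables (R : realType) (M : nat) (sl Lt smax smin sig2 : R) (alpha : nat -> R).

Definition En n :=
  \sum_(1 <= i < n.+1) qfun sig2 (alpha i.-1) * \prod_(i <= m < n.+1) pfun smin (alpha m).

Lemma En0 : En 0 = 0.
Proof. by rewrite /En big_geq. Qed.

Lemma EnS n : En n.+1 = pfun smin (alpha n.+1) * (En n + qfun sig2 (alpha n)).
Proof.
rewrite /En [in LHS]big_nat_recr //= big_nat1 [in RHS]mulrDr [X in _ = _ + X]mulrC.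
congr (_ + _).
rewrite big_distrr; apply: eq_big_nat => i /andP [_ le_in].
by rewrite big_nat_recr 1?ltnW //= mulrA mulrC.
Qed.

Lemma BknS n k : (k <= n.+1)%N ->
  Bkn M sl Lt smax smin alpha n.+1 k =
  Afun sl (alpha n.+1) * Bkn M sl Lt smax smin alpha n k +
  Bfun M Lt smax smin (alpha n.+1) * \prod_(k <= i < n.+1) pfun smin (alpha i).
Proof.
move=> le_kn; rewrite /Bkn big_nat_recr //= [\prod_(n.+2 <= i < n.+2) _]big_geq // mul1r.
congr (_ + _).
rewrite big_distrr; apply: eq_big_nat => j /andP [_ lt_jn].
by rewrite [in LHS]big_nat_recr //= -!mulrA mulrCA.
Qed.

Lemma Sn0 : Sn M sl Lt smax smin sig2 alpha 0 = 0.
Proof. by rewrite /Sn big_geq. Qed.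

Lemma SnS n :
  Sn M sl Lt smax smin sig2 alpha n.+1 =
  Afun sl (alpha n.+1) * Sn M sl Lt smax smin sig2 alpha n +
  Bfun M Lt smax smin (alpha n.+1) * (En n + qfun sig2 (alpha n)).
Proof.
rewrite /Sn /En; under eq_big_nat => i /andP [_ lt_in] do
  rewrite BknS // mulrDr (mulrCA (qfun _ _)) (mulrCA (qfun _ _)).
rewrite big_split /= -!big_distrr !(big_nat_recr n.+1) //=.
by rewrite [Bkn _ _ _ _ _ _ n _]big_geq // [\prod_(n.+1 <= i < n.+1) _]big_geq // mulr0 mulr1 addr0.
Qed.

End Recursions.

Section SingularValues.
Variable R : realType.

Lemma sum_singular_values_sqr M N (A : 'M[R]_(M, N)) sigma :
  singular_values A sigma ->
  \sum_(j < N) sigma j ^+ 2 = \sum_(i < M) \sum_(j < N) A i j ^+ 2.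
Proof.
case=> _ [_ [U [V [UTU [VTV defA]]]]].
have -> : \sum_(j < N) sigma j ^+ 2 = \tr (A^T *m A).
  set D := diag_mx _ in defA.
  rewrite defA !trmx_mul trmxK tr_diag_mx -!mulmxA mxtrace_mulC !mulmxA.
  rewrite -[D *m U^T *m U]mulmxA UTU mulmx1 -[D *m D *m V^T *m V]mulmxA VTV.
  by rewrite mulmx1 mulmx_diag mxtrace_diag; apply: eq_bigr => j _; rewrite !mxE.
rewrite /mxtrace exchange_big; apply: eq_bigr => j _; rewrite mxE.
by apply: eq_bigr => i _; rewrite mxE expr2.
Qed.

Lemma singular_value_sqr_le M N (A : 'M[R]_(M, N)) sigma l :
  singular_values A sigma -> (l < N)%N -> sigma l ^+ 2 <= M%:R * Ltilde A.
Proof.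
move=> svA lt_lN.
apply: (@le_trans _ _ (\sum_(i < M) \sum_(j < N) A i j ^+ 2)).
  rewrite -(sum_singular_values_sqr svA) (bigD1 (Ordinal lt_lN)) //= lerDl.
  by apply: sumr_ge0 => j _; exact: sqr_ge0.
rewrite -[M in M%:R]card_ord mulr_natl -sumr_const; apply: ler_sum => i _.
exact: (le_bigmax 0 (fun i => \sum_(j < N) A i j ^+ 2)).
Qed.

Lemma singular_value_sqr_ge_min M N (A : 'M[R]_(M, N)) sigma l :
  singular_values A sigma -> (l < N)%N -> sigma N.-1 ^+ 2 <= sigma l ^+ 2.
Proof.
case=> sigma_anti [sigma_ge0 _] lt_lN; have N_gt0 : (0 < N)%N by apply: leq_ltn_trans lt_lN.
have lt_N1 : (N.-1 < N)%N by rewrite prednK.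
have le_lN1 : (l <= N.-1)%N by rewrite -ltnS prednK.
by rewrite ler_pXn2r ?nnegrE ?sigma_ge0 ?sigma_anti.
Qed.

Lemma Ltilde_ge0 M N (A : 'M[R]_(M, N)) : 0 <= Ltilde A.
Proof. exact: bigmax_ge_id. Qed.

Lemma step_singular_value_le M N (A : 'M[R]_(M, N)) sigma l u :
  singular_values A sigma -> (l < N)%N -> 0 < u -> u <= (2 * M%:R * Ltilde A)^-1 ->
  2 * u * sigma l ^+ 2 <= 1.
Proof.
move=> svA lt_lN u_gt0; rewrite -mulrA; set ML := M%:R * Ltilde A => le_u.
have ML_gt0 : 0 < ML by move: (lt_le_trans u_gt0 le_u); rewrite invr_gt0 pmulr_rgt0.
apply: (@le_trans _ _ (2 * (2 * ML)^-1 * ML)).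
  apply: ler_pM; rewrite ?sqr_ge0 ?ler_wpM2l ?singular_value_sqr_le //.
  by rewrite mulr_ge0 // ltW.
suff -> : 2 * (2 * ML)^-1 * ML = 1 by [].
by field; rewrite gt_eqF.
Qed.

End SingularValues.

Section StepSizes.
Variable R : realType.
Implicit Types M : nat.
Implicit Types sl Lt smax smin a b u y : R.

Lemma Bfun_scale M Lt smax smin u :
  Bfun M Lt smax smin u = u ^+ 2 * Bfun M Lt smax smin 1.
Proof. by rewrite /Bfun expr1n mul1r !mulrA. Qed.

Lemma Afun_bounds sl smin u : 0 <= u -> smin ^+ 2 <= sl ^+ 2 -> 2 * u * sl ^+ 2 <= 1 ->
  0 <= Afun sl u <= 1 - 2 * (u * smin ^+ 2).
Proof.
move=> u_ge0 le_smin le_u; rewrite /Afun subr_ge0 le_u /=.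
by rewrite lerD2l lerN2 -mulrA ler_wpM2l // ler_wpM2l.
Qed.

Lemma pfun_bounds sl smin u : 0 <= u -> smin ^+ 2 <= sl ^+ 2 -> 2 * u * sl ^+ 2 <= 1 ->
  0 <= pfun smin u <= 1 - u * smin ^+ 2.
Proof.
move=> u_ge0 le_smin le_u; rewrite /pfun lexx andbT subr_ge0.
apply: le_trans (ler_wpM2l u_ge0 le_smin) _.
have := sqr_ge0 sl; have := mulr_ge0 u_ge0 (sqr_ge0 sl); rewrite mulrA in le_u; lra.
Qed.

Lemma ler_div_succ a y : 0 <= a -> 1 <= y -> a / y <= 2 * a / (y + 1).
Proof.
move=> a_ge0 y_ge1; have y_gt0 : 0 < y by lra.
rewrite ler_pdivlMr ?(addr_gt0 y_gt0) // mulrAC ler_pdivrMr //.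
nra.
Qed.

Lemma Bfun_ge0 M Lt smax smin u : 0 <= Lt -> 0 <= Bfun M Lt smax smin u.
Proof.
move=> Lt_ge0; have condA_ge0 : 0 <= condA smax smin by rewrite divr_ge0 ?sqr_ge0.
apply: mulr_ge0; last exact: sqr_ge0.
by rewrite mulr_ge0 // mulr_ge0 // mulr_ge0 ?sqr_ge0.
Qed.

(* [condA smax 0] divides by [0], which Rocq evaluates to [0]. *)
Lemma Sn_smin0 M sl Lt smax sig2 alpha n : Sn M sl Lt smax 0 sig2 alpha n = 0.
Proof.
have B0 u : Bfun M Lt smax 0 u = 0 by rewrite /Bfun /condA expr0n /= invr0 !mulr0 mul0r.
by rewrite /Sn big1 // => i _; rewrite /Bkn big1 ?mulr0 // => j _; rewrite B0 mulr0 mul0r.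
Qed.

Lemma qfun_step_le sig2 a b n : 0 <= sig2 -> 0 <= a -> 1 <= b ->
  qfun sig2 (a / (b + n%:R)) <= 8 * a ^+ 2 * sig2 / (b + n.+1%:R) ^+ 2.
Proof.
move=> sig2_ge0 a_ge0 b_ge1; have x_ge1 : 1 <= b + n%:R by rewrite (le_trans b_ge1) ?lerDl.
have le_step : a / (b + n%:R) <= 2 * a / (b + n.+1%:R).
  by rewrite -[n.+1%:R]natr1 addrA ler_div_succ.
have -> : 8 * a ^+ 2 * sig2 / (b + n.+1%:R) ^+ 2 = 2 * (2 * a / (b + n.+1%:R)) ^+ 2 * sig2.
  by rewrite expr_div_n; ring.
have x_ge0 : 0 <= b + n%:R := le_trans ler01 x_ge1.
have step_ge0 : 0 <= a / (b + n%:R) by rewrite divr_ge0.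
by rewrite /qfun ler_wpM2r // ler_wpM2l // ler_pXn2r // nnegrE ?(le_trans step_ge0).
Qed.

Lemma Sn_decay M sl Lt smax smin sig2 a b (r t : R) :
  0 < a -> 1 <= b -> smin ^+ 2 <= sl ^+ 2 -> 2 * (a / b) * sl ^+ 2 <= 1 ->
  0 <= sig2 -> 0 <= Bfun M Lt smax smin 1 ->
  0 <= r -> r <= 1 -> r < a * smin ^+ 2 ->
  0 <= t -> t <= 1 + r -> t < 2 * (a * smin ^+ 2) ->
  exists K, forall n,
    Sn M sl Lt smax smin sig2 (fun k => a / (b + k%:R)) n <= K * (b + n%:R) `^ (- t).
Proof.
move=> a_gt0 b_ge1 le_smin le_ab sig2_ge0 B1_ge0 r_ge0 r_le1 lt_rs t_ge0 t_le lt_ts.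
set alpha := fun k => a / (b + k%:R).
have b_gt0 : 0 < b := lt_le_trans ltr01 b_ge1.
have x_ge1 n : 1 <= b + n%:R by apply: le_trans b_ge1 _; rewrite lerDl.
have x_gt0 n : 0 < b + n%:R := lt_le_trans ltr01 (x_ge1 n).
have le_step n : 2 * alpha n * sl ^+ 2 <= 1.
  apply: le_trans le_ab; rewrite ler_wpM2r ?sqr_ge0 // ler_pM2l //.
  by rewrite ler_pM2l // lef_pV2 ?posrE ?lerDl.
have alpha_ge0 n : 0 <= alpha n by rewrite divr_ge0 // ltW.
have A_bound n : 0 <= Afun sl (alpha n.+1) <= 1 - 2 * (a * smin ^+ 2) / (b + n.+1%:R).
  have := Afun_bounds (alpha_ge0 n.+1) le_smin (le_step n.+1).
  by rewrite /alpha /= [_ / _ * _]mulrAC !mulrA.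
have P_bound n : 0 <= pfun smin (alpha n.+1) <= 1 - a * smin ^+ 2 / (b + n.+1%:R).
  have := pfun_bounds (alpha_ge0 n.+1) le_smin (le_step n.+1).
  by rewrite /alpha /= [_ / _ * _]mulrAC.
have B_bound n : 0 <= Bfun M Lt smax smin (alpha n.+1)
                   <= a ^+ 2 * Bfun M Lt smax smin 1 / (b + n.+1%:R) ^+ 2.
  by rewrite Bfun_scale mulr_ge0 ?sqr_ge0 //= /alpha /= expr_div_n mulrAC.
have Q_bound n : 0 <= qfun sig2 (alpha n) <= 8 * a ^+ 2 * sig2 / (b + n.+1%:R) ^+ 2.
  apply/andP; split; last exact: qfun_step_le (ltW a_gt0) b_ge1.
  by rewrite /qfun mulr_ge0 // mulr_ge0 // sqr_ge0.
have [K K_ge0 le_S] := recurrence_decay (b := b) (s := a * smin ^+ 2) (r := r) (t := t)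
  (Cb := a ^+ 2 * Bfun M Lt smax smin 1) (Cq := 8 * a ^+ 2 * sig2)
  (A := fun k => Afun sl (alpha k)) (B := fun k => Bfun M Lt smax smin (alpha k))
  (P := fun k => pfun smin (alpha k)) (Q := fun k => qfun sig2 (alpha k))
  (S := Sn M sl Lt smax smin sig2 alpha) (E := En smin sig2 alpha)
  (ltW b_gt0) r_ge0 r_le1 lt_rs t_ge0 t_le lt_ts (mulr_ge0 (sqr_ge0 a) B1_ge0)
  (mulr_ge0 (mulr_ge0 (ler0n R 8) (sqr_ge0 a)) sig2_ge0)
  (Sn0 _ _ _ _ _ _ _) (En0 _ _ _) (SnS _ _ _ _ _ _ _) (EnS _ _ _)
  A_bound P_bound B_bound Q_bound.
exists K => n; apply: le_trans (le_S n) _; rewrite ler_wpM2l //.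
by apply: ler_powRN_base; rewrite ?lerD2l ?ler_nat.
Qed.

End StepSizes.

Lemma exponent_choice (R : realType) (s : R) (P : R -> Prop) :
  (forall r t, 0 <= r -> r <= 1 -> r < s -> 0 <= t -> t <= 1 + r -> t < 2 * s -> P t) ->
  (0 < s -> s < 2 -> P s) /\ (2 < s -> P 2).
Proof.
move=> HP; split=> [s_gt0 lt_s2 | gt_s2].
  by apply: (HP (s / 2) s); lra.
by apply: (HP 1 2); lra.
Qed.

Lemma noise_var_ge0 (R : realType) M N (A : 'M[R]_(M, N)) y xs : 0 <= noise_var A y xs.
Proof.
rewrite /noise_var mulr_ge0 ?invr_ge0 ?ler0n ?sumr_ge0 // => i _.
by rewrite sumr_ge0 // => j _; exact: sqr_ge0.
Qed.

Theorem lemma16 (R : realType) (M N : nat) (A : 'M[R]_(M, N)) (y : 'cV[R]_M)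
    (sigma : nat -> R) (ell : nat) (xs : 'cV[R]_N) (a b : R) :
  (0 < N)%N -> (N <= M)%N ->
  \rank A = N ->
  singular_values A sigma ->
  (forall x : 'cV[R]_N, Fobj A y xs <= Fobj A y x) ->
  (ell < N)%N ->
  0 < a -> 1 < b -> a / b <= (2 * M%:R * Ltilde A)^-1 ->
  let smax := sigma 0%N in
  let smin := sigma N.-1 in
  let sl := sigma ell in
  let sig2 := noise_var A y xs in
  let alpha := fun k : nat => a / (b + k%:R) in
  let S := Sn M sl (Ltilde A) smax smin sig2 alpha in
  let s := a * smin ^+ 2 in
  (s < 2 -> exists K : R, forall n : nat, (1 <= n)%N ->
      S n <= K * (b + n%:R) `^ (- s)) /\
  (2 < s -> exists K : R, forall n : nat, (1 <= n)%N ->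
      S n <= K * (b + n%:R) `^ (-2)).
Proof.
move=> _ _ _ svA _ lt_ellN a_gt0 b_gt1 le_ab smax smin sl sig2 alpha S s.
have le_smin : smin ^+ 2 <= sl ^+ 2 := singular_value_sqr_ge_min svA lt_ellN.
have ab_gt0 : 0 < a / b by rewrite divr_gt0 // (lt_trans ltr01).
have le_step := step_singular_value_le svA lt_ellN ab_gt0 le_ab.
have decay r t : 0 <= r -> r <= 1 -> r < s -> 0 <= t -> t <= 1 + r -> t < 2 * s ->
    exists K, forall n, (1 <= n)%N -> S n <= K * (b + n%:R) `^ (- t).
  move=> r_ge0 r_le1 lt_rs t_ge0 t_le lt_ts.
  have [K le_S] := Sn_decay a_gt0 (ltW b_gt1) le_smin le_step (noise_var_ge0 A y xs)
    (Bfun_ge0 M smax smin 1 (Ltilde_ge0 A)) r_ge0 r_le1 lt_rs t_ge0 t_le lt_ts.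
  by exists K => n _; exact: le_S.
have [decay_lt2 decay_gt2] := exponent_choice decay.
split=> [lt_s2 | /decay_gt2 //].
(* Full rank excludes s = 0, but the argument does not need it: then smin = 0 and S vanishes. *)
have [s_eq0 | s_neq0] := eqVneq s 0; last first.
  by apply: decay_lt2; rewrite // lt_def s_neq0 mulr_ge0 ?sqr_ge0 // ltW.
have smin_eq0 : smin = 0.
  by move/eqP: s_eq0; rewrite mulf_eq0 gt_eqF //= sqrf_eq0 => /eqP.
by exists 0 => n _; rewrite /S smin_eq0 Sn_smin0 mul0r.
Qed.
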